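(* For every integer $m\geq 1$, let \[F_m(q)=1+\sum_{k=1}^{m-1}(-1)^k\prod_{i=0}^{k-1}\left(\frac{1}{q^{m-1-i}}-1\right).\] Then, as formal Laurent series in $q$, \[\sum_{n=1}^{\infty}a_m(n)q^n=\frac{F_m(q)}{(q;q)_\infty}-\mathcal{D}_m,\] where $\mathcal{D}_m$ is the sum of the terms with exponent of $q$ less than or equal to $0$ in the Laurent expansion of $F_m(q)/(q;q)_\infty$.
   Context: $a_m(n)$ is the number of partitions of $n$ in which the smallest part occurs at least $m$ times. $(a;q)_\infty=\prod_{i\geq 0}(1-aq^i)$, so $1/(q;q)_\infty=\sum_{n\geq0}p(n)q^n$ with $p(n)$ the number of partitions of $n$. Empty sums are $0$ and empty products are $1$. *)

From HB Require Import structures.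
From mathcomp Require Import all_boot all_order all_algebra fraction.
Set Implicit Arguments. Unset Strict Implicit. Unset Printing Implicit Defensive.
Import Order.TTheory GRing.Theory Num.Theory.
Local Open Scope ring_scope.

(* Partitions of n, encoded by multiplicities: f i = number of parts equal
   to i+1 (each multiplicity is necessarily <= n). *)
Definition is_partition (n : nat) (f : {ffun 'I_n -> 'I_n.+1}) : bool :=
  (\sum_(i < n) (i.+1 * f i))%N == n.

Definition npart (n : nat) : nat := #|[set f : {ffun 'I_n -> 'I_n.+1} | is_partition f]|.

Definition smallest_ge (m n : nat) (f : {ffun 'I_n -> 'I_n.+1}) : bool :=
  [exists i : 'I_n, (m <= f i)%N && [forall j : 'I_n, (j < i)%N ==> (f j == ord0)]].

Definition a_m (m n : nat) : nat :=
  #|[set f : {ffun 'I_n -> 'I_n.+1} | is_partition f && smallest_ge m f]|.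

Definition Fq := {fraction {poly int}}.
Definition toF (p : {poly int}) : Fq := @FracField.tofrac _ p.
Definition qF : Fq := toF 'X.
Definition F_m (m : nat) : Fq :=
  1 + \sum_(1 <= k < m) (-1) ^+ k *
        \prod_(0 <= i < k) (qF ^- (m - 1 - i) - 1).

Definition pZ (n : int) : int := if (0 <= n) then (npart `|n|%N)%:Z else 0.

(* Coefficient of q^n (n : int) in the Laurent expansion of
   (P(q) / q^D) / (q;q)_oo = q^-D P(q) * sum_k p(k) q^k. *)
Definition laurent_coef (D : nat) (P : {poly int}) (n : int) : int :=
  \sum_(j < size P) P`_j * pZ (n + D%:Z - j%:Z).

Definition Dm_coef (D : nat) (P : {poly int}) (n : int) : int :=
  if n <= 0 then laurent_coef D P n else 0.

Definition lhs_coef (m : nat) (n : int) : int :=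
  if 1 <= n then (a_m m `|n|%N)%:Z else 0.

(* A partition of n + m (m > 0) whose smallest part occurs at least m times
   either has at least m parts equal to 1, and removing m of them leaves an
   arbitrary partition of n; or its smallest part is s + 1 > 1, and trading m
   of those parts for m parts equal to s leaves a partition of n whose smallest
   part occurs exactly m times.  Both maps are invertible, hence
   a_m(n + m) = p(n) + a_m(n) - a_(m+1)(n).  Since
   F_(m+1) = 1 - (q^-m - 1) F_m, the coefficients c_m(n) of F_m(q)/(q;q)_oo
   obey the same recursion c_(m+1)(n) = p(n) + c_m(n) - c_m(n + m), and
   c_1 = p = a_1 on positive exponents; induction on m gives c_m(n) = a_m(n)
   for n >= 1.  The c_m(n) do not depend on how F_m is written as P(q)/q^D. *)

From HB Require Import structures.
From mathcomp Require Import all_boot all_order all_algebra fraction.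
From mathcomp Require Import zify ring.
From Stdlib Require Import FunctionalExtensionality.
Import Order.TTheory GRing.Theory Num.Theory.
Local Open Scope ring_scope.
Set Implicit Arguments. Unset Strict Implicit. Unset Printing Implicit Defensive.

Section Multiplicities.
Local Open Scope nat_scope.
Implicit Types (K n m i j c : nat) (h g : nat -> nat).

Definition multiplicity K (f : {ffun 'I_K -> 'I_K.+1}) i : nat :=
  oapp (fun j : 'I_K => nat_of_ord (f j)) 0 (insub i).

Definition ffun_of_mult K h : {ffun 'I_K -> 'I_K.+1} := [ffun i : 'I_K => inord (h i)].

(* The image of [multiplicity] on {ffun 'I_K -> 'I_K.+1}. *)
Definition bounded_mult K h := (forall i, h i <= K) /\ (forall i, K <= i -> h i = 0).

Definition weight K h := \sum_(i < K) i.+1 * h i.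

Lemma multiplicity_ord K f (i : 'I_K) : multiplicity f i = f i.
Proof. by rewrite /multiplicity valK. Qed.

Lemma multiplicity_out K f i : K <= i -> multiplicity (K:=K) f i = 0.
Proof. by move=> Ki; rewrite /multiplicity insubN // -leqNgt. Qed.

Lemma multiplicity_bounded K f : bounded_mult K (multiplicity (K:=K) f).
Proof.
split=> [i|]; last exact: multiplicity_out.
by rewrite /multiplicity; case: insubP => [j _ _|] //=; rewrite -ltnS ltn_ord.
Qed.

Lemma multiplicityK K : cancel (@multiplicity K) (ffun_of_mult K).
Proof. by move=> f; apply/ffunP => i; rewrite ffunE multiplicity_ord inord_val. Qed.

Lemma ffun_of_multK K h : bounded_mult K h -> multiplicity (ffun_of_mult K h) = h.
Proof.
move=> [hK h0]; apply: functional_extensionality => i.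
case: (ltnP i K) => [iK|Ki]; last by rewrite multiplicity_out ?h0.
by rewrite -[i]/(nat_of_ord (Ordinal iK)) multiplicity_ord ffunE inordK // ltnS.
Qed.

Lemma bounded_mult_widen n K h : n <= K -> bounded_mult n h -> bounded_mult K h.
Proof.
move=> nK [hn h0]; split=> i; first exact: leq_trans (hn i) nK.
by move=> Ki; apply: h0 (leq_trans nK Ki).
Qed.

Lemma weight_widen n K h :
  n <= K -> (forall i, n <= i -> h i = 0) -> weight K h = weight n h.
Proof.
move=> nK h0; rewrite /weight (big_ord_widen _ (fun i => i.+1 * h i) nK).
rewrite [RHS]big_mkcond; apply: eq_bigr => i _.
by case: ltnP => // /h0 ->; rewrite muln0.
Qed.

Lemma weight_ge_part K h i : i < K -> i.+1 * h i <= weight K h.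
Proof. by move=> iK; rewrite /weight (bigD1 (Ordinal iK)) //= leq_addr. Qed.

Lemma bounded_mult_weight K h n :
  bounded_mult K h -> weight K h = n -> bounded_mult n h.
Proof.
move=> [_ h0] hn; split=> i; case: (ltnP i K) => [iK|/h0-> //];
  have := weight_ge_part h iK; rewrite hn; case: (h i) => // x; rewrite mulnS; lia.
Qed.

Lemma weight_update K h g i : i < K -> (forall k, k != i -> g k = h k) ->
  weight K g + i.+1 * h i = weight K h + i.+1 * g i.
Proof.
move=> iK gh; rewrite /weight (bigD1 (Ordinal iK)) // [in RHS](bigD1 (Ordinal iK)) //=.
rewrite (eq_bigr (fun k : 'I_K => k.+1 * h k)); first lia.
by move=> k ki; rewrite gh // -(inj_eq val_inj).
Qed.

Definition add_parts h i c k := if k == i then h k + c else h k.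
Definition remove_parts h i c k := if k == i then h k - c else h k.
Definition move_parts h i j c := add_parts (remove_parts h i c) j c.

Lemma remove_partsK h i c : remove_parts (add_parts h i c) i c = h.
Proof.
apply: functional_extensionality => k.
by rewrite /remove_parts /add_parts; case: eqP => // _; rewrite addnK.
Qed.

Lemma add_partsK h i c : c <= h i -> add_parts (remove_parts h i c) i c = h.
Proof.
move=> ch; apply: functional_extensionality => k.
by rewrite /remove_parts /add_parts; case: eqP => // ->; rewrite subnK.
Qed.

Lemma move_partsK h i j c : c <= h i -> move_parts (move_parts h i j c) j i c = h.
Proof. by move=> ch; rewrite /move_parts remove_partsK add_partsK. Qed.

Lemma move_parts_src h i j c : i != j -> move_parts h i j c i = h i - c.
Proof. by rewrite /move_parts /add_parts /remove_parts eqxx => /negbTE->. Qed.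

Lemma move_parts_dst h i j c : i != j -> move_parts h i j c j = h j + c.
Proof. by rewrite /move_parts /add_parts /remove_parts eq_sym eqxx => /negbTE->. Qed.

Lemma move_parts_other h i j c k :
  k != i -> k != j -> move_parts h i j c k = h k.
Proof. by rewrite /move_parts /add_parts /remove_parts => /negbTE-> /negbTE->. Qed.

Lemma weight_add_parts K h i c :
  i < K -> weight K (add_parts h i c) = weight K h + i.+1 * c.
Proof.
move=> iK; have other k : k != i -> add_parts h i c k = h k.
  by rewrite /add_parts => /negbTE->.
have at_i : add_parts h i c i = h i + c by rewrite /add_parts eqxx.
have := weight_update iK other; rewrite at_i mulnDr; lia.
Qed.

Lemma weight_remove_parts K h i c : i < K -> c <= h i ->
  weight K (remove_parts h i c) + i.+1 * c = weight K h.
Proof.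
by move=> iK ch; rewrite -[in RHS](add_partsK ch) weight_add_parts.
Qed.

Lemma weight_move_parts K h i j c : i < K -> j < K -> c <= h i ->
  weight K (move_parts h i j c) + i.+1 * c = weight K h + j.+1 * c.
Proof.
move=> iK jK ch; rewrite weight_add_parts // -(weight_remove_parts iK ch); lia.
Qed.

Lemma bounded_add_parts K h i c :
  bounded_mult K h -> i < K -> h i + c <= K -> bounded_mult K (add_parts h i c).
Proof.
move=> [hK h0] iK hic; split=> k; rewrite /add_parts; first by case: eqP => [->|_].
by case: eqP => [->|_ /h0 //]; rewrite leqNgt iK.
Qed.

Lemma bounded_remove_parts K h i c :
  bounded_mult K h -> bounded_mult K (remove_parts h i c).
Proof.
move=> [hK h0]; split=> k; rewrite /remove_parts.
  by case: eqP => _; first apply: leq_trans (leq_subr _ _) _.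
by move=> Kk; rewrite h0 //; case: eqP.
Qed.

Lemma bounded_move_parts K h i j c :
  bounded_mult K h -> j < K -> h j + c <= K -> bounded_mult K (move_parts h i j c).
Proof.
move=> bh jK hjc; apply: bounded_add_parts (bounded_remove_parts _ _ bh) jK _.
apply: leq_trans hjc; rewrite leq_add2r /remove_parts.
by case: eqP => // _; apply: leq_subr.
Qed.

(* Equals K when h vanishes on [0, K). *)
Definition smallest_index K h := find (fun i => h i != 0) (iota 0 K).
Definition smallest_mult K h := h (smallest_index K h).

Lemma smallest_index_le K h : smallest_index K h <= K.
Proof. by rewrite /smallest_index -[X in _ <= X](size_iota 0 K) find_size. Qed.

Lemma before_smallest_index K h j : j < smallest_index K h -> h j = 0.
Proof.
move=> js; have jK := leq_trans js (smallest_index_le K h).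
by have := before_find 0 js; rewrite nth_iota // add0n => /negbFE/eqP.
Qed.

Lemma smallest_mult_neq0 K h : smallest_index K h < K -> smallest_mult K h != 0.
Proof.
move=> sK; have := @nth_find _ 0 (fun i => h i != 0) (iota 0 K).
by rewrite has_find size_iota nth_iota // => /(_ sK).
Qed.

Lemma smallest_indexE K h i :
  i < K -> h i != 0 -> (forall j, j < i -> h j = 0) -> smallest_index K h = i.
Proof.
move=> iK hi hj; case: (ltngtP (smallest_index K h) i) => // [lt_si|gt_si].
  by have := smallest_mult_neq0 (ltn_trans lt_si iK); rewrite /smallest_mult hj ?eqxx.
by rewrite (before_smallest_index gt_si) eqxx in hi.
Qed.

Lemma smallest_index_eq0 K h : 0 < K -> (smallest_index K h == 0) = (h 0 != 0).
Proof. by case: K => // K _; rewrite /smallest_index /=; case: (h 0 != 0). Qed.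

Lemma weight_gt0_smallest_mult K h : 0 < weight K h -> 0 < smallest_mult K h.
Proof.
move=> w0; have [i hi] : exists i : 'I_K, h i != 0.
  apply/existsP; apply: contraTT w0 => /existsPn h0.
  rewrite -leqNgt leqn0 /weight; apply/eqP/big1 => i _.
  by rewrite (eqP (negbNE (h0 i))) muln0.
have sK : smallest_index K h < K.
  apply: leq_ltn_trans (ltn_ord i); rewrite leqNgt.
  by apply: contra hi => /before_smallest_index ->.
by rewrite lt0n smallest_mult_neq0.
Qed.

Lemma smallest_mult_geP K h m : 0 < m -> (forall i, K <= i -> h i = 0) ->
  reflect (exists i, m <= h i /\ forall j, j < i -> h j = 0) (m <= smallest_mult K h).
Proof.
move=> m0 h0; apply: (iffP idP) => [ms|[i [mi hi]]].
  by exists (smallest_index K h); split=> //; apply: before_smallest_index.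
have hi0 : h i != 0 by rewrite -lt0n (leq_trans m0 mi).
have iK : i < K by rewrite ltnNge; apply: contra hi0 => /h0 ->.
by rewrite /smallest_mult (smallest_indexE iK).
Qed.

Lemma weight_multiplicity K (f : {ffun 'I_K -> 'I_K.+1}) :
  weight K (multiplicity f) = \sum_(i < K) i.+1 * f i.
Proof. by apply: eq_bigr => i _; rewrite multiplicity_ord. Qed.

Lemma smallest_ge_mult m n (f : {ffun 'I_n -> 'I_n.+1}) :
  0 < m -> smallest_ge m f = (m <= smallest_mult n (multiplicity f)).
Proof.
move=> m0; apply/existsP/(smallest_mult_geP m0 (multiplicity_out f)).
  move=> [i /andP[mi /forallP hj]]; exists i; rewrite multiplicity_ord.
  split=> // j ji; have jn : j < n := ltn_trans ji (ltn_ord i).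
  rewrite -[j]/(nat_of_ord (Ordinal jn)) multiplicity_ord.
  by have /implyP/(_ ji)/eqP-> := hj (Ordinal jn).
move=> [i [mi hj]]; have iK : i < n.
  by rewrite ltnNge; apply: contraTN mi => /(multiplicity_out f)->; rewrite -ltnNge.
exists (Ordinal iK); rewrite -multiplicity_ord mi /=.
apply/forallP => j; apply/implyP => ji; apply/eqP/val_inj.
by rewrite /= -multiplicity_ord hj.
Qed.

Definition count_weight K n (Q : (nat -> nat) -> bool) :=
  #|[set f : {ffun 'I_K -> 'I_K.+1} |
      (weight K (multiplicity f) == n) && Q (multiplicity f)]|.

Lemma count_weight_bij K K' n n' (Q Q' : (nat -> nat) -> bool) phi psi :
  (forall h, bounded_mult K h -> weight K h = n -> Q h ->
     [/\ bounded_mult K' (phi h), weight K' (phi h) = n', Q' (phi h) & psi (phi h) = h]) ->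
  (forall g, bounded_mult K' g -> weight K' g = n' -> Q' g ->
     [/\ bounded_mult K (psi g), weight K (psi g) = n, Q (psi g) & phi (psi g) = g]) ->
  count_weight K n Q = count_weight K' n' Q'.
Proof.
move=> phiP psiP.
pose F (x : {ffun 'I_K -> 'I_K.+1}) := ffun_of_mult K' (phi (multiplicity x)).
pose G (y : {ffun 'I_K' -> 'I_K'.+1}) := ffun_of_mult K (psi (multiplicity y)).
have FK : {in [set x | (weight K (multiplicity x) == n) && Q (multiplicity x)],
            cancel F G}.
  move=> x; rewrite inE => /andP[/eqP wx Qx].
  have [bx _ _ ex] := phiP _ (multiplicity_bounded x) wx Qx.
  by rewrite /G /F ffun_of_multK // ex multiplicityK.
rewrite /count_weight -(card_in_imset (can_in_inj FK)); apply: eq_card => y.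
rewrite inE; apply/imsetP/andP => [[x]|[/eqP wy Qy]].
  rewrite inE => /andP[/eqP wx Qx] ->.
  have [bx wx' Qx' _] := phiP _ (multiplicity_bounded x) wx Qx.
  by rewrite /F ffun_of_multK // wx'.
have [bY wy' Qy' ey] := psiP _ (multiplicity_bounded y) wy Qy.
exists (G y); first by rewrite inE /G ffun_of_multK // wy' eqxx.
by rewrite /F /G ffun_of_multK // ey multiplicityK.
Qed.

Lemma count_weight_widen n K (Q Q' : (nat -> nat) -> bool) : n <= K ->
  (forall h, bounded_mult n h -> weight n h = n -> Q h = Q' h) ->
  count_weight n n Q = count_weight K n Q'.
Proof.
move=> nK QQ'; apply: (@count_weight_bij _ _ _ _ _ _ id id) => h bh wh Qh.
  have wK : weight K h = n by rewrite (weight_widen nK) //; case: bh.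
  by split=> //; [apply: bounded_mult_widen bh | rewrite -QQ'].
have bn := bounded_mult_weight bh wh.
have wn : weight n h = n by rewrite -(weight_widen nK) //; case: bn.
by split=> //; rewrite QQ'.
Qed.

Lemma count_weight_split K n (Q R : (nat -> nat) -> bool) :
  count_weight K n Q =
    count_weight K n (fun h => Q h && R h) + count_weight K n (fun h => Q h && ~~ R h).
Proof.
rewrite /count_weight -(cardsID [set f | R (multiplicity f)]).
by congr (_ + _); apply: eq_card => f; rewrite !inE;
  case: (R _); case: (Q _); rewrite ?andbT ?andbF.
Qed.

Lemma npart_count_weight n K : n <= K -> npart n = count_weight K n xpredT.
Proof.
move=> nK; rewrite -(@count_weight_widen n K xpredT _ nK) //.
by apply: eq_card => f; rewrite !inE /is_partition weight_multiplicity andbT.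
Qed.

Lemma a_m_count_weight m n K : 0 < m -> n <= K ->
  a_m m n = count_weight K n (fun h => m <= smallest_mult K h).
Proof.
move=> m0 nK; rewrite -(@count_weight_widen n K (fun h => m <= smallest_mult n h) _ nK).
  by apply: eq_card => f; rewrite !inE /is_partition weight_multiplicity smallest_ge_mult.
move=> h [_ h0] _; have hK0 i : K <= i -> h i = 0 by move/(leq_trans nK)/h0.
by apply/(smallest_mult_geP m0 h0)/(smallest_mult_geP m0 hK0).
Qed.

Lemma eq_count_weight K n (Q Q' : (nat -> nat) -> bool) :
  Q =1 Q' -> count_weight K n Q = count_weight K n Q'.
Proof. by move=> QQ'; apply: eq_card => f; rewrite !inE QQ'. Qed.

Lemma a_1_npart n : 0 < n -> a_m 1 n = npart n.
Proof.
move=> n0; rewrite (a_m_count_weight (ltn0Sn 0) (leqnn n)) (npart_count_weight (leqnn n)).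
by apply: count_weight_widen => // h _ wh; apply: weight_gt0_smallest_mult; rewrite wh.
Qed.

End Multiplicities.

(* Index s stands for the part size s.+1, as in [is_partition]. *)
Definition lower_smallest K m h :=
  let s := smallest_index K h in move_parts h s s.-1 m.
Definition raise_smallest K m h :=
  let s := smallest_index K h in move_parts h s s.+1 m.

Section SmallestPartRecurrence.
Local Open Scope nat_scope.
Variables n m : nat.
Hypothesis m_gt0 : 0 < m.
Local Notation K := (n + m).
Implicit Types h g : nat -> nat.

Let K_gt0 : 0 < K.
Proof. by rewrite addn_gt0 m_gt0 orbT. Qed.

Lemma lower_smallestP h :
  bounded_mult K h -> weight K h = K ->
  smallest_index K h != 0 -> m <= smallest_mult K h ->
  [/\ bounded_mult K (lower_smallest K m h), weight K (lower_smallest K m h) = n,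
      smallest_mult K (lower_smallest K m h) == m
    & raise_smallest K m (lower_smallest K m h) = h].
Proof.
move=> bh wh; rewrite /lower_smallest /raise_smallest /smallest_mult.
case Es: (smallest_index K h) => [|i] // _ mh /=.
have hi : h i = 0 by apply: (@before_smallest_index K); rewrite Es.
have iK : i.+1 < K.
  by rewrite ltnNge; apply/negP => /(proj2 bh) h0; rewrite h0 in mh; lia.
set p := move_parts h i.+1 i m.
have p_i : p i = m by rewrite /p move_parts_dst ?hi // gtn_eqF.
have p_lt k : k < i -> p k = 0.
  move=> ki; have ki1 : k < i.+1 := ltn_trans ki (ltnSn i).
  rewrite /p move_parts_other ?ltn_eqF //.
  by apply: (@before_smallest_index K); rewrite Es.
have sp : smallest_index K p = i.
  by apply: smallest_indexE => //; [apply: ltnW | rewrite p_i -lt0n].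
split.
- by apply: bounded_move_parts bh (ltnW iK) _; rewrite hi leq_addl.
- have := weight_move_parts iK (ltnW iK) mh; rewrite -/p wh mulSn; lia.
- by rewrite sp p_i.
- by rewrite sp move_partsK.
Qed.

Lemma raise_smallestP g :
  bounded_mult K g -> weight K g = n -> smallest_mult K g == m ->
  [/\ bounded_mult K (raise_smallest K m g), weight K (raise_smallest K m g) = K,
      (smallest_index K (raise_smallest K m g) != 0) &&
        (m <= smallest_mult K (raise_smallest K m g))
    & lower_smallest K m (raise_smallest K m g) = g].
Proof.
move=> bg wg; rewrite /lower_smallest /raise_smallest /smallest_mult => /eqP gm.
set s := smallest_index K g in gm *.
have [gn g0] := bounded_mult_weight bg wg.
have sn : s < n by rewrite ltnNge; apply/negP => /g0; rewrite gm; lia.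
have s1K : s.+1 < K by lia.
set q := move_parts g s s.+1 m.
have ne : s != s.+1 by rewrite ltn_eqF.
have q_s1 : q s.+1 = g s.+1 + m by rewrite /q move_parts_dst.
have q_le k : k <= s -> q k = 0.
  rewrite leq_eqVlt => /orP[/eqP->|ks]; first by rewrite /q move_parts_src // gm subnn.
  have ks1 : k < s.+1 := ltn_trans ks (ltnSn s).
  by rewrite /q move_parts_other ?ltn_eqF //; apply: (before_smallest_index ks).
have sq : smallest_index K q = s.+1.
  by apply: smallest_indexE => //; rewrite q_s1 -lt0n ltn_addl.
split.
- by apply: bounded_move_parts bg s1K _; rewrite leq_add2r.
- have := weight_move_parts (ltnW s1K) s1K (eq_leq (esym gm)); rewrite -/q wg mulSn; lia.
- by rewrite sq q_s1 leq_addl.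
- by rewrite sq /= move_partsK // gm.
Qed.

Lemma count_remove_ones :
  count_weight K K (fun h => m <= h 0) = count_weight K n xpredT.
Proof.
apply: (@count_weight_bij _ _ _ _ _ _ (fun h => remove_parts h 0 m) (fun g => add_parts g 0 m)).
  move=> h bh wh mh; split=> //; first exact: bounded_remove_parts.
    by have := weight_remove_parts K_gt0 mh; rewrite wh mul1n; lia.
  exact: add_partsK.
move=> g bg wg _; have g0n : g 0 <= n by case: (bounded_mult_weight bg wg).
split; last exact: remove_partsK.
- by apply: bounded_add_parts; rewrite ?leq_add2r.
- by rewrite weight_add_parts // wg mul1n.
- by rewrite /add_parts eqxx leq_addl.
Qed.

Lemma count_shift_smallest :
  count_weight K K
    (fun h => (smallest_index K h != 0) && (m <= smallest_mult K h))
  = count_weight K n (fun h => smallest_mult K h == m).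
Proof.
apply: (@count_weight_bij _ _ _ _ _ _ (lower_smallest K m) (raise_smallest K m)).
  by move=> h bh wh /andP[s0 mh]; apply: lower_smallestP.
exact: raise_smallestP.
Qed.

Lemma a_m_rec : a_m m (n + m) + a_m m.+1 n = npart n + a_m m n.
Proof.
have split_high : count_weight K K (fun h => m <= smallest_mult K h) =
    count_weight K K (fun h => m <= h 0) +
    count_weight K K (fun h => (smallest_index K h != 0) && (m <= smallest_mult K h)).
  rewrite (count_weight_split _ _ _ (fun h => smallest_index K h == 0)).
  congr (_ + _); apply: eq_count_weight => h; last exact: andbC.
  have [h00|h0] := eqVneq (h 0) 0.
    by rewrite smallest_index_eq0 // h00 eqxx andbF leqNgt m_gt0.
  by rewrite /smallest_mult (smallest_indexE K_gt0 h0) // andbT.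
have split_low : count_weight K n (fun h => m <= smallest_mult K h) =
    count_weight K n (fun h => m < smallest_mult K h) +
    count_weight K n (fun h => smallest_mult K h == m).
  rewrite (count_weight_split _ _ _ (fun h => m < smallest_mult K h)).
  congr (_ + _); apply: eq_count_weight => h; first by rewrite andb_idl // => /ltnW.
  by rewrite -leqNgt -eqn_leq eq_sym.
rewrite (a_m_count_weight m_gt0 (leqnn K)) (a_m_count_weight (ltn0Sn m) (leq_addr m n)).
rewrite (npart_count_weight (leq_addr m n)) (a_m_count_weight m_gt0 (leq_addr m n)).
rewrite split_high split_low count_remove_ones count_shift_smallest; lia.
Qed.

End SmallestPartRecurrence.

Lemma qF_neq0 : qF != 0.
Proof. by rewrite tofrac_eq0 polyX_eq0. Qed.

Section LaurentCoefficients.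
Implicit Types (D k : nat) (P Q : {poly int}) (n : int).

Lemma laurent_coef_widen D P n K : (size P <= K)%N ->
  laurent_coef D P n = \sum_(j < K) P`_j * pZ (n + D%:Z - j%:Z).
Proof.
move=> PK; rewrite /laurent_coef.
rewrite (big_ord_widen _ (fun j => P`_j * pZ (n + D%:Z - j%:Z)) PK) [LHS]big_mkcond.
apply: eq_bigr => j _; case: ltnP => // /(nth_default 0) ->.
by rewrite mul0r.
Qed.

Lemma laurent_coefD D P Q n :
  laurent_coef D (P + Q) n = laurent_coef D P n + laurent_coef D Q n.
Proof.
have PQ : (size (P + Q)%R <= size P + size Q)%N.
  by apply: leq_trans (size_polyD _ _) _; rewrite geq_max leq_addr leq_addl.
rewrite (laurent_coef_widen _ _ PQ) (laurent_coef_widen _ _ (leq_addr (size Q) _)).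
rewrite (laurent_coef_widen _ _ (leq_addl (size P) _)) -big_split.
by apply: eq_bigr => j _; rewrite coefD mulrDl.
Qed.

Lemma laurent_coefN D P n : laurent_coef D (- P) n = - laurent_coef D P n.
Proof.
rewrite /laurent_coef size_polyN -sumrN.
by apply: eq_bigr => j _; rewrite coefN mulNr.
Qed.

Lemma laurent_coef_shift D k P n :
  laurent_coef (D + k) P n = laurent_coef D P (n + k%:Z).
Proof.
by rewrite /laurent_coef; apply: eq_bigr => j _; rewrite PoszD; congr (_ * pZ _); lia.
Qed.

Lemma laurent_coef_mulXn D k P n :
  laurent_coef (D + k) ('X^k * P) n = laurent_coef D P n.
Proof.
have XkP : (size ('X^k * P)%R <= k + size P)%N.
  by apply: leq_trans (size_polyMleq _ _) _; rewrite size_polyXn addSn.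
rewrite (laurent_coef_widen _ _ XkP).
rewrite -(big_mkord xpredT (fun j => ('X^k * P)`_j * pZ (n + (D + k)%:Z - j%:Z))).
rewrite (big_cat_nat (leq0n k) (leq_addr _ k)) /= big_nat_cond big1 ?add0r; last first.
  by move=> j /andP[/andP[_ jk] _]; rewrite coefXnM jk mul0r.
rewrite -{1}[k]add0n big_addn addKn big_mkord; apply: eq_bigr => j _.
rewrite coefXnM ltnNge leq_addl /= addnK; congr (_ * pZ _).
by rewrite !PoszD; lia.
Qed.

Lemma laurent_coef_Xn D n : laurent_coef D 'X^D n = pZ n.
Proof.
rewrite -[D]add0n -[in 'X^_](mulr1 'X^D) laurent_coef_mulXn.
by rewrite /laurent_coef size_poly1 big_ord1 coefC /= mul1r addr0 subr0.
Qed.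

Lemma laurent_coef_frac D D' P P' n :
  toF P / qF ^+ D = toF P' / qF ^+ D' -> laurent_coef D P n = laurent_coef D' P' n.
Proof.
move/eqP; rewrite eqr_div ?expf_neq0 ?qF_neq0 // /qF /toF -!tofracXn -!tofracM tofrac_eq.
move/eqP=> E; rewrite -(laurent_coef_mulXn D D') mulrC E mulrC addnC.
exact: laurent_coef_mulXn.
Qed.

Lemma laurent_coef_step D k P n :
  laurent_coef (D + k) ('X^(D + k) + 'X^k * P - P) n =
    pZ n + laurent_coef D P n - laurent_coef D P (n + k%:Z).
Proof.
by rewrite !laurent_coefD laurent_coefN laurent_coef_Xn laurent_coef_mulXn laurent_coef_shift.
Qed.

End LaurentCoefficients.

Lemma F_m_rec k : F_m k.+2 = 1 - (qF ^- k.+1 - 1) * F_m k.+1.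
Proof.
pose prod_k j := \prod_(0 <= i < j) (qF ^- (k.+1 - 1 - i) - 1).
have F_k1 : F_m k.+1 = \sum_(0 <= j < k.+1) (-1) ^+ j * prod_k j.
  by rewrite big_nat_recl // expr0 mul1r /prod_k big_geq // /F_m big_add1.
have F_k2 : F_m k.+2 =
    1 + \sum_(0 <= j < k.+1) (-1) ^+ j.+1 * ((qF ^- k.+1 - 1) * prod_k j).
  rewrite /F_m big_add1 /=; congr (1 + _); apply: eq_bigr => j _.
  rewrite big_nat_recl //; congr (_ * (_ * _)).
  by apply: eq_bigr => i _; congr (qF ^- _ - 1); lia.
rewrite F_k2 F_k1 mulr_sumr -sumrN; congr (1 + _); apply: eq_bigr => j _.
by rewrite exprS mulN1r mulNr mulrCA.
Qed.

Lemma F_m_frac_rec k D P : F_m k.+1 = toF P / qF ^+ D ->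
  F_m k.+2 = toF ('X^(D + k.+1) + 'X^(k.+1) * P - P) / qF ^+ (D + k.+1).
Proof.
have toF_num : toF ('X^(D + k.+1) + 'X^(k.+1) * P - P) =
    qF ^+ D * qF ^+ k.+1 + qF ^+ k.+1 * toF P - toF P.
  by rewrite /toF /qF tofracB tofracD tofracM !tofracXn exprD.
move=> E; rewrite F_m_rec E toF_num exprD.
have clear_denominators (F : fieldType) (p x y : F) : x != 0 -> y != 0 ->
    1 - (y^-1 - 1) * (p / x) = (x * y + y * p - p) / (x * y).
  by move=> x0 y0; field; rewrite x0 y0.
exact: clear_denominators (expf_neq0 D qF_neq0) (expf_neq0 k.+1 qF_neq0).
Qed.

Lemma F_m_laurent k : exists D P, F_m k.+1 = toF P / qF ^+ D /\
  forall n : int, 1 <= n -> laurent_coef D P n = (a_m k.+1 `|n|%N)%:Z.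
Proof.
elim: k => [|k [D [P [E IH]]]].
  exists 0%N, 1; split; first by rewrite /F_m big_geq // addr0 divr1 /toF tofrac1.
  case=> [n|//] n_pos; have := laurent_coef_Xn 0 n; rewrite expr0 => ->.
  by rewrite /pZ /= a_1_npart.
exists (D + k.+1)%N, ('X^(D + k.+1) + 'X^(k.+1) * P - P); split.
  exact: F_m_frac_rec.
case=> [n|//] n_pos; rewrite laurent_coef_step !IH //; last by lia.
have := a_m_rec n (ltn0Sn k); move/(congr1 Posz); rewrite !PoszD /pZ /=; lia.
Qed.

Unset Implicit Arguments.

Theorem theorem3p3 (m : nat) (hm : (1 <= m)%N) :
  (exists (D : nat) (P : {poly int}), F_m m = toF P / qF ^+ D) /\
  (forall (D : nat) (P : {poly int}), F_m m = toF P / qF ^+ D ->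
     forall n : int, lhs_coef m n = laurent_coef D P n - Dm_coef D P n).
Proof.
case: m hm => [//|k] _; have [D0 [P0 [E0 coef0]]] := F_m_laurent k.
split; first by exists D0, P0.
move=> D P E n; rewrite /lhs_coef /Dm_coef (laurent_coef_frac n (etrans (esym E) E0)).
case: (lerP 1 n) => n1.
  have -> : (n <= 0) = false by lia.
  by rewrite coef0 // subr0.
have -> : (n <= 0) = true by lia.
by rewrite subrr.
Qed.
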